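(* Let $G$ be a ribbon graph. If the set $\{\varepsilon(G^A): A\subseteq E(G)\}$ contains two consecutive integers $k$ and $k+1$, then every integer $m$ with $k+2\le m\le \varepsilon_M(G)$ belongs to $\{\varepsilon(G^A): A\subseteq E(G)\}$.
   Context: A ribbon graph $G$ is a (possibly non-orientable) surface with boundary given as a union of a set $V(G)$ of vertex discs and a set $E(G)$ of edge discs such that vertices and edges meet in disjoint line segments, each such segment lies on the boundary of exactly one vertex and exactly one edge, and each edge contains exactly two such segments. With $v(G),e(G),f(G),c(G)$ the numbers of vertices, edges, boundary components and connected components, the Euler genus is $\varepsilon(G)=2c(G)-(v(G)-e(G)+f(G))$. For $A\subseteq E(G)$, the partial dual $G^A$ is obtained by gluing a disc along each boundary component of the spanning ribbon subgraph $(V(G),A)$ (these become the vertices of $G^A$), removing the interiors of all vertex discs of $G$, and keeping the edge discs unchanged. The maximum partial-dual Euler genus is $\varepsilon_M(G)=\max\{\varepsilon(G^A):A\subseteq E(G)\}$. *)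

(* Ribbon graphs encoded combinatorially as graph-encoded maps
   (gems / flag systems). *)
From mathcomp Require Import all_boot all_order all_algebra.
Set Implicit Arguments. Unset Strict Implicit. Unset Printing Implicit Defensive.
Import Order.TTheory GRing.Theory Num.Theory.
Local Open Scope ring_scope.

Section RibbonGraphs.
Variable D : finType. (* the flags of the ribbon graph *)

Definition gen2 (f g : D -> D) : rel D := fun x y => (y == f x) || (y == g x).
Definition gen3 (f g h : D -> D) : rel D :=
  fun x y => [|| y == f x, y == g x | y == h x].

Definition norb (r : rel D) : nat := #|[set [set y | connect r x y] | x : D]|.

(* Axioms of a (possibly non-orientable, possibly disconnected) combinatorial map:
   a0 changes the vertex, a1 changes the edge, a2 changes the side.
   vertices = <a1,a2>-orbits, edges = <a0,a2>-orbits, boundary components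
   (faces) = <a0,a1>-orbits, connected components = <a0,a1,a2>-orbits. *)
Definition is_ribbon_graph (a0 a1 a2 : D -> D) : Prop :=
  [/\ involutive a0, involutive a1 & involutive a2] /\
  [/\ (forall x, a0 x != x), (forall x, a1 x != x) & (forall x, a2 x != x)] /\
  (forall x, a0 (a2 x) = a2 (a0 x)) /\ (forall x, a0 x != a2 x).

(* A set of flags closed under a0 and a2 = a union of edges, i.e. a subset of E(G) *)
Definition edge_set (a0 a2 : D -> D) (A : {set D}) : bool :=
  [forall x, (x \in A) ==> ((a0 x \in A) && (a2 x \in A))].

(* Euler genus eps = 2c - (v - e + f); [iso] counts isolated (edgeless) vertices,
   each of which is a vertex, a boundary component and a connected component. *)
Definition euler_genus (a0 a1 a2 : D -> D) (iso : nat) : int :=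
  2 * (norb (gen3 a0 a1 a2) + iso)%:Z
  - ((norb (gen2 a1 a2) + iso)%:Z - (norb (gen2 a0 a2))%:Z
     + (norb (gen2 a0 a1) + iso)%:Z).

(* Partial dual w.r.t. the edge set A: swap a0 and a2 on the flags of A. *)
Definition pd0 (a0 a2 : D -> D) (A : {set D}) (x : D) : D :=
  if x \in A then a2 x else a0 x.
Definition pd2 (a0 a2 : D -> D) (A : {set D}) (x : D) : D :=
  if x \in A then a0 x else a2 x.

Definition pd_genus (a0 a1 a2 : D -> D) (iso : nat) (A : {set D}) : int :=
  euler_genus (pd0 a0 a2 A) a1 (pd2 a0 a2 A) iso.

(* eps_M(G) = max over A of eps(G^A) (the empty set is always an edge set) *)
Definition max_pd_genus (a0 a1 a2 : D -> D) (iso : nat) : int :=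
  \big[Num.max/pd_genus a0 a1 a2 iso set0]_(A : {set D} | edge_set a0 a2 A)
     pd_genus a0 a1 a2 iso A.

End RibbonGraphs.

(* The edges and components of G^A do not depend on A, so eps(G^A) = const - nvf A
   with nvf A = v(G^A) + f(G^A).  The flags of each vertex of G^A form two cycles of
   the permutation a1 o pd2 A, and toggling one edge multiplies this permutation by
   two transpositions, so it moves v and f by at most one each.  The heart of the
   proof: if nvf W + 2 <= nvf X then nvf X - 2 is attained.  In a minimal
   counterexample, toggling any single edge of the symmetric difference D of X and W
   raises both v and f by one, while nvf X = nvf W + 3.  For such an edge the
   opposite flags x and a0 (a2 x) lie in one cycle, hence in the same class of a
   2-colouring of the flags that picks one cycle per vertex; restricted to that
   class the permutation has one cycle per vertex and the toggle is a single
   transposition, which changes v by exactly one.  Hence from W to X both v and f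
   change parity |D|/4 times, and nvf X, nvf W have the same parity.  Walking down
   in steps of 2 from the sets realising k and k + 1 gives every value from k + 2
   up to eps_M. *)

From mathcomp Require Import all_boot all_order all_algebra all_fingroup zify.
Set Implicit Arguments. Unset Strict Implicit. Unset Printing Implicit Defensive.

Lemma involutive_closed_mem (T : finType) (f : T -> T) (A : {set T}) :
  involutive f -> (forall x, x \in A -> f x \in A) -> forall x, (f x \in A) = (x \in A).
Proof. by move=> fK fA x; apply/idP/idP => [/fA|/fA//]; rewrite fK. Qed.

Lemma perm_comp_exists (T : finType) (f g : T -> T) :
  injective f -> injective g -> exists s : {perm T}, forall x, s x = f (g x).
Proof. by move=> f_inj g_inj; exists (perm (inj_comp f_inj g_inj)) => x; rewrite permE. Qed.

Lemma eq_norb (T : finType) (r1 r2 : rel T) : r1 =2 r2 -> norb r1 = norb r2.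
Proof.
move=> r12; apply: eq_card => S; apply/imsetP/imsetP => -[x _ ->]; exists x => //;
  by apply/setP => y; rewrite !inE (eq_connect r12).
Qed.

Section SymmetricDifference.
Variable T : finType.
Implicit Types A B C : {set T}.

Definition symdiff A B := [set x | (x \in A) (+) (x \in B)].

Lemma in_symdiff A B x : (x \in symdiff A B) = (x \in A) (+) (x \in B).
Proof. by rewrite inE. Qed.

Lemma symdiffA A B C : symdiff A (symdiff B C) = symdiff (symdiff A B) C.
Proof. by apply/setP => x; rewrite !in_symdiff addbA. Qed.

Lemma symdiffKr A B : symdiff B (symdiff A B) = A.
Proof. by apply/setP => x; rewrite !in_symdiff addbC -addbA addbb addbF. Qed.

Lemma symdiffK A B : symdiff (symdiff A B) B = A.
Proof. by apply/setP => x; rewrite !in_symdiff -addbA addbb addbF. Qed.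

Lemma symdiff0 A : symdiff A set0 = A.
Proof. by apply/setP => x; rewrite in_symdiff inE addbF. Qed.

Lemma setC_symdiff A B : ~: symdiff A B = symdiff (~: A) B.
Proof. by apply/setP => x; rewrite !inE addNb. Qed.

Lemma symdiff_eq0 A B : (symdiff A B == set0) = (A == B).
Proof.
apply/eqP/eqP => [e|->]; last by apply/setP => x; rewrite in_symdiff addbb inE.
apply/setP => x; move/setP/(_ x): e; rewrite in_symdiff inE.
by case: (x \in A); case: (x \in B).
Qed.

Lemma symdiff_sub A B : B \subset A -> symdiff A B = A :\: B.
Proof.
move/subsetP=> BA; apply/setP => x; rewrite in_symdiff !inE.
by case/boolP: (x \in B) => [/BA->|]; rewrite ?addbF ?andbT.
Qed.

End SymmetricDifference.

Section PermStableSet.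
Variables (T : finType) (u : {perm T}) (P : {set T}).
Hypothesis uP : forall x, (u x \in P) = (x \in P).

Lemma porbit_stable x y : y \in porbit u x -> (y \in P) = (x \in P).
Proof.
case/porbitP=> i ->; elim: i => [|i IH]; first by rewrite expg0 perm1.
by rewrite expgSr permM uP.
Qed.

Lemma card_porbits_stable :
  #|porbits u| = #|porbit u @: P| + #|porbit u @: ~: P|.
Proof.
have -> : porbits u = porbit u @: P :|: porbit u @: ~: P.
  rewrite -imsetU setUCr; apply/setP => S.
  by apply/imsetP/imsetP => -[x _ ->]; exists x.
rewrite cardsU (_ : _ :&: _ = set0) ?cards0 ?subn0 //.
apply/setP => S; rewrite !inE; apply/andP => -[/imsetP[x xP ->] /imsetP[y]].
rewrite inE => yNP /eqP; rewrite eq_porbit_mem => /porbit_stable.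
by rewrite xP (negbTE yNP).
Qed.
End PermStableSet.

Section InvolutionPair.
Variables (T : finType) (b t : T -> T).
Hypotheses (bK : involutive b) (tK : involutive t).
Hypotheses (b_nfix : forall x, b x != x) (t_nfix : forall x, t x != x).
Variable s : {perm T}.
Hypothesis sE : forall x, s x = b (t x).

Definition bt_class x := [set y | connect (gen2 b t) x y].

Lemma gen2_sym : symmetric (gen2 b t).
Proof.
move=> x y; apply/orP/orP => -[/eqP->|/eqP->]; by [left; rewrite bK | right; rewrite tK].
Qed.

Lemma connect_gen2_sym : connect_sym (gen2 b t).
Proof. exact: sym_connect_sym gen2_sym. Qed.

Lemma bt_classP x y : reflect (bt_class x = bt_class y) (connect (gen2 b t) x y).
Proof.
apply: (iffP idP) => [xy|e]; last first.
  have : y \in bt_class y by rewrite inE connect0.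
  by rewrite -e inE.
apply/setP => z; rewrite !inE; apply/idP/idP; last exact: connect_trans.
by apply: connect_trans; rewrite connect_gen2_sym.
Qed.

Lemma bt_class_b x : bt_class (b x) = bt_class x.
Proof. by apply/esym/bt_classP/connect1; rewrite /gen2 eqxx. Qed.

Lemma t_perm x : t x = b (s x).
Proof. by rewrite sE bK. Qed.

Lemma b_perm x : b (s x) = (s^-1)%g (b x).
Proof. by apply: (canRL (permK s)); rewrite sE -t_perm tK. Qed.

Lemma b_permX i x : b ((s ^+ i)%g x) = ((s ^+ i)^-1)%g (b x).
Proof.
elim: i x => [|i IH] x; first by rewrite expg0 invg1 perm1 perm1.
by rewrite [in LHS]expgS permM IH b_perm -permM -invMg -expgSr.
Qed.

Lemma porbit_b x y : y \in porbit s x -> b y \in porbit s (b x).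
Proof. by case/porbitP=> i ->; rewrite b_permX -porbitV -expgVn mem_porbit. Qed.

Lemma porbit_perm_closed x y : y \in porbit s x -> s y \in porbit s x.
Proof. by case/porbitP=> i ->; rewrite -permM -expgSr mem_porbit. Qed.

Lemma b_notin_porbit x : b x \notin porbit s x.
Proof.
(* If b x = s^k x, then s^(k/2) x is fixed by b or by t. *)
apply/negP => /porbitP[k bx]; pose m := k./2; pose y := (s ^+ m)%g x.
have b_y : b y = (s ^+ odd k)%g y.
  rewrite b_permX bx -{1}(odd_double_half k) -addnn addnA expgD permM permK.
  by rewrite -permM -expgD addnC.
case: (odd k) b_y => /eqP; last by rewrite expg0 perm1 (negbTE (b_nfix _)).
by rewrite expg1 sE (inj_eq (can_inj bK)) eq_sym (negbTE (t_nfix _)).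
Qed.

Lemma connect_porbit x y : y \in porbit s x -> connect (gen2 b t) x y.
Proof.
case/porbitP=> i ->; elim: i => [|i IH]; first by rewrite expg0 perm1 connect0.
rewrite expgSr permM; apply: (connect_trans IH); set z := (s ^+ i)%g x.
have z_tz : gen2 b t z (t z) by rewrite /gen2 eqxx orbT.
have tz_sz : gen2 b t (t z) (s z) by rewrite /gen2 sE eqxx.
exact: connect_trans (connect1 z_tz) (connect1 tz_sz).
Qed.

Lemma bt_class_sub x y : connect (gen2 b t) x y -> y \in porbit s x :|: porbit s (b x).
Proof.
set S := porbit s x :|: porbit s (b x).
have bS : forall u, u \in S -> b u \in S.
  move=> u; rewrite !inE => /orP[/porbit_b->|/porbit_b]; first by rewrite orbT.
  by rewrite bK => ->.
have tS : forall u, u \in S -> t u \in S.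
  move=> u uS; rewrite t_perm; apply: bS; move: uS.
  by rewrite !inE => /orP[]/porbit_perm_closed->; rewrite ?orbT.
have clS : closed (gen2 b t) S.
  move=> u v /orP[]/eqP->;
  by rewrite ?(involutive_closed_mem bK bS) ?(involutive_closed_mem tK tS).
by move=> /(closed_connect clS) <-; rewrite inE porbit_id.
Qed.

(* A proper 2-colouring of the graph with edges x -- b x and x -- t x; P then contains
   exactly one of the two s-cycles of each <b, t>-class. *)
Definition alternating (P : {set T}) :=
  forall x, (b x \in P) = (x \notin P) /\ (t x \in P) = (x \notin P).

Lemma alternating_perm P : alternating P -> forall x, (s x \in P) = (x \in P).
Proof. by move=> altP x; rewrite sE (altP _).1 (altP _).2 negbK. Qed.

Lemma alternating_setC P : alternating P -> alternating (~: P).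
Proof. by move=> altP x; rewrite !inE (altP x).1 (altP x).2. Qed.

Lemma porbit_alternating P x :
  alternating P -> x \in P -> porbit s x = bt_class x :&: P.
Proof.
move=> altP xP; apply/setP => y; rewrite !inE; apply/idP/andP.
  move=> xy; rewrite connect_porbit //.
  by rewrite (porbit_stable (alternating_perm altP) xy).
case=> /bt_class_sub; rewrite inE => /orP[//|xy] yP.
by move: yP; rewrite (porbit_stable (alternating_perm altP) xy) (altP x).1 xP.
Qed.

Lemma card_porbits_alternating P :
  alternating P -> #|porbit s @: P| = norb (gen2 b t).
Proof.
move=> altP; have -> : porbit s @: P = (fun S => S :&: P) @: (bt_class @: P).
  by rewrite -imset_comp; apply: eq_in_imset => x xP; rewrite /= (porbit_alternating altP).
rewrite card_in_imset; last first.
  move=> _ _ /imsetP[x xP ->] /imsetP[y yP ->] /= exy.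
  have : x \in bt_class y :&: P by rewrite -exy !inE connect0.
  by rewrite !inE => /andP[/bt_classP].
apply: eq_card => S; apply/imsetP/imsetP => -[x _ ->]; first by exists x.
case/boolP: (x \in P) => xP; first by exists x.
by exists (b x); rewrite ?bt_class_b // (altP x).1.
Qed.

Lemma mem_porbit_perm x y : (s x \in porbit s y) = (x \in porbit s y).
Proof.
by have := porbit_perm s 1 x; rewrite expg1 porbit_sym => ->; rewrite porbit_sym.
Qed.

Lemma alternating_exists : exists P, alternating P.
Proof.
pose r := fingraph.root (gen2 b t).
have r_gen2 x y : gen2 b t x y -> r y = r x.
  by move=> xy; apply/esym/(fingraph.rootP connect_gen2_sym)/connect1.
have rb x : r (b x) = r x by apply: r_gen2; rewrite /gen2 eqxx.
have rt x : r (t x) = r x by apply: r_gen2; rewrite /gen2 eqxx orbT.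
have rs x : r (s x) = r x by rewrite sE rb rt.
have b_out x : (b x \in porbit s (r x)) = (x \notin porbit s (r x)).
  case/boolP: (x \in porbit s (r x)) => xr /=.
    apply/negP => /porbit_b; rewrite bK -eq_porbit_mem => /eqP xbr.
    have := xr; rewrite -eq_porbit_mem xbr => /eqP brr.
    by have := b_notin_porbit (r x); rewrite -brr porbit_id.
  have rx : connect (gen2 b t) (r x) x by rewrite connect_gen2_sym connect_root.
  have := bt_class_sub rx; rewrite inE (negbTE xr) => /porbit_b.
  by rewrite bK.
exists [set x | x \in porbit s (r x)] => x; rewrite !inE rb rt b_out; split=> //.
by have := b_out (s x); rewrite -t_perm rs mem_porbit_perm.
Qed.

Lemma card_porbits : #|porbits s| = (norb (gen2 b t)).*2.
Proof.
have [P altP] := alternating_exists.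
rewrite (card_porbits_stable (alternating_perm altP)) (card_porbits_alternating altP).
by rewrite (card_porbits_alternating (alternating_setC altP)) addnn.
Qed.

Lemma perm_restrict_exists P : alternating P ->
  exists rho : {perm T}, forall x, rho x = if x \in P then s x else x.
Proof.
move=> altP; have inj : injective (fun x => if x \in P then s x else x).
  move=> x y /=; case: ifPn => xP; case: ifPn => yP //; first exact: perm_inj.
  - by move=> e; move: yP; rewrite -e (alternating_perm altP) xP.
  - by move=> e; move: xP; rewrite e (alternating_perm altP) yP.
by exists (perm inj) => x; rewrite permE.
Qed.

Lemma card_porbits_restrict P (rho : {perm T}) : alternating P ->
  (forall x, rho x = if x \in P then s x else x) ->
  #|porbits rho| = norb (gen2 b t) + #|~: P|.
Proof.
move=> altP rhoE.
have rhoP x : (rho x \in P) = (x \in P).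
  by rewrite rhoE; case: ifP => xP; rewrite ?(alternating_perm altP) xP.
have rhoX x i : x \in P -> (rho ^+ i)%g x = (s ^+ i)%g x.
  move=> xP; elim: i => [|i IH]; first by rewrite !expg0.
  rewrite !expgSr !permM IH rhoE.
  by rewrite (porbit_stable (alternating_perm altP) (mem_porbit s i x)) xP.
have porbit_rho x : x \in P -> porbit rho x = porbit s x.
  by move=> xP; apply/setP => y; apply/porbitP/porbitP => -[i ->]; exists i; rewrite rhoX.
have porbit_rho1 x : x \in ~: P -> porbit rho x = [set x].
  rewrite inE => xNP; apply/setP => y; rewrite inE.
  apply/porbitP/eqP => [[i ->]|->]; last by exists 0; rewrite expg0 perm1.
  by rewrite permX_fix // rhoE (negbTE xNP).
rewrite (card_porbits_stable rhoP) -(card_porbits_alternating altP).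
by rewrite (eq_in_imset porbit_rho) (eq_in_imset porbit_rho1) (card_imset _ set1_inj).
Qed.

End InvolutionPair.

Section PartialDuals.
Variables (T : finType) (a0 a1 a2 : T -> T).
Hypotheses (a0K : involutive a0) (a1K : involutive a1) (a2K : involutive a2).
Hypotheses (a0_nfix : forall x, a0 x != x) (a1_nfix : forall x, a1 x != x).
Hypothesis a2_nfix : forall x, a2 x != x.
Hypotheses (a02C : forall x, a0 (a2 x) = a2 (a0 x)) (a0_neq_a2 : forall x, a0 x != a2 x).
Implicit Types A B D P W X Y Z : {set T}.

Lemma edge_setP A :
  reflect (forall x, (a0 x \in A) = (x \in A) /\ (a2 x \in A) = (x \in A))
          (edge_set a0 a2 A).
Proof.
apply: (iffP forallP) => [AE x | AE x]; last by rewrite (AE x).1 (AE x).2 andbb implybb.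
by split; apply: involutive_closed_mem => // y /(implyP (AE y)) /andP[].
Qed.

Lemma edge_set_a0 A x : edge_set a0 a2 A -> (a0 x \in A) = (x \in A).
Proof. by move/edge_setP/(_ x) => []. Qed.

Lemma edge_set_a2 A x : edge_set a0 a2 A -> (a2 x \in A) = (x \in A).
Proof. by move/edge_setP/(_ x) => []. Qed.

Lemma edge_setC A : edge_set a0 a2 A -> edge_set a0 a2 (~: A).
Proof.
by move=> hA; apply/edge_setP => x; rewrite !inE !(edge_set_a0 _ hA, edge_set_a2 _ hA).
Qed.

Lemma edge_setD A B :
  edge_set a0 a2 A -> edge_set a0 a2 B -> edge_set a0 a2 (A :\: B).
Proof.
move=> hA hB; apply/edge_setP => x.
by rewrite !inE !(edge_set_a0 _ hA, edge_set_a0 _ hB, edge_set_a2 _ hA, edge_set_a2 _ hB).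
Qed.

Lemma edge_set_symdiff A B :
  edge_set a0 a2 A -> edge_set a0 a2 B -> edge_set a0 a2 (symdiff A B).
Proof.
move=> hA hB; apply/edge_setP => x.
by rewrite !in_symdiff
  !(edge_set_a0 _ hA, edge_set_a0 _ hB, edge_set_a2 _ hA, edge_set_a2 _ hB).
Qed.

Lemma pd2K A : edge_set a0 a2 A -> involutive (pd2 a0 a2 A).
Proof.
move=> hA x; rewrite /pd2; case xA: (x \in A).
  by rewrite edge_set_a0 // xA a0K.
by rewrite edge_set_a2 // xA a2K.
Qed.

Lemma pd2_nfix A x : pd2 a0 a2 A x != x.
Proof. by rewrite /pd2; case: ifP. Qed.

(* v(G^A) and v(G^A) + f(G^A): the faces of G^A are the <pd0 A, a1>-orbits, and
   pd0 A = pd2 (~: A). *)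
Definition nvert A := norb (gen2 a1 (pd2 a0 a2 A)).

Definition nvf A := nvert A + nvert (~: A).

Lemma card_porbits_nvert A (s : {perm T}) : edge_set a0 a2 A ->
  (forall x, s x = a1 (pd2 a0 a2 A x)) -> #|porbits s| = (nvert A).*2.
Proof. by move=> hA; apply: (card_porbits a1K (pd2K hA) a1_nfix (@pd2_nfix A)). Qed.

Lemma vertex_perm_exists A : edge_set a0 a2 A ->
  exists s : {perm T}, forall x, s x = a1 (pd2 a0 a2 A x).
Proof. by move=> hA; apply: perm_comp_exists (can_inj a1K) (can_inj (pd2K hA)). Qed.

Definition edge_flags x := [set:: [:: x; a0 x; a2 x; a0 (a2 x)]].

Lemma a0a2_nfix x : a0 (a2 x) != x.
Proof. by apply: contraNneq (a0_neq_a2 x) => e; rewrite -{1}e a0K. Qed.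

Lemma edge_flags_uniq x : uniq [:: x; a0 x; a2 x; a0 (a2 x)].
Proof.
rewrite /= !inE !negb_or !(eq_sym x) a0_nfix a2_nfix a0a2_nfix a0_neq_a2.
by rewrite (inj_eq (can_inj a0K)) eq_sym a2_nfix eq_sym a0_nfix.
Qed.

Lemma card_edge_flags x : #|edge_flags x| = 4.
Proof. by rewrite cardsE; apply/card_uniqP/edge_flags_uniq. Qed.

Lemma edge_flagsP x y :
  reflect [\/ y = x, y = a0 x, y = a2 x | y = a0 (a2 x)] (y \in edge_flags x).
Proof.
rewrite inE !in_cons in_nil orbF; apply: (iffP idP).
  by case/or4P=> /eqP; [constructor 1|constructor 2|constructor 3|constructor 4].
by case=> ->; rewrite eqxx ?orbT.
Qed.

Lemma edge_flags_id x : x \in edge_flags x.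
Proof. by apply/edge_flagsP; constructor 1. Qed.

Lemma edge_set_edge_flags x : edge_set a0 a2 (edge_flags x).
Proof.
apply/edge_setP => y; split; apply: involutive_closed_mem => // z /edge_flagsP[]->;
  apply/edge_flagsP; rewrite -?a02C ?a0K ?a2K;
  by [constructor 1 | constructor 2 | constructor 3 | constructor 4].
Qed.

Lemma edge_flags_sub D x : edge_set a0 a2 D -> x \in D -> edge_flags x \subset D.
Proof.
move=> hD xD; apply/subsetP => y /edge_flagsP[]->;
by rewrite ?edge_set_a0 ?edge_set_a2.
Qed.

Lemma edge_flags_eq x y : y \in edge_flags x -> edge_flags y = edge_flags x.
Proof.
move=> yx; apply/eqP; rewrite eqEcard !card_edge_flags leqnn andbT.
exact: edge_flags_sub (edge_set_edge_flags x) yx.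
Qed.

Lemma a0a2K x : a0 (a2 (a0 (a2 x))) = x.
Proof. by rewrite a02C a0K a2K. Qed.

Lemma a0a2a0 x : a0 (a2 (a0 x)) = a2 x.
Proof. by rewrite -a02C a0K. Qed.

Lemma pd2_symdiff_edge Z x y : edge_set a0 a2 Z -> y \in edge_flags x ->
  pd2 a0 a2 (symdiff Z (edge_flags x)) y = pd2 a0 a2 Z (a0 (a2 y)).
Proof.
move=> hZ yx; rewrite /pd2 in_symdiff yx addbT edge_set_a0 // edge_set_a2 //.
by case: (y \in Z); rewrite /= ?a0K // -a02C a2K.
Qed.

Lemma pd2_symdiff_out Z x y : y \notin edge_flags x ->
  pd2 a0 a2 (symdiff Z (edge_flags x)) y = pd2 a0 a2 Z y.
Proof. by move=> yx; rewrite /pd2 in_symdiff (negbTE yx) addbF. Qed.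

Lemma tperm_edge_flags x y : y \in edge_flags x ->
  tperm x (a0 (a2 x)) (tperm (a0 x) (a2 x) y) = a0 (a2 y).
Proof.
move=> yx; have := edge_flags_uniq x; rewrite /= !inE !negb_or.
case/and4P=> /and3P[x_a0 x_a2 x_w] /andP[a0_a2 a0_w] a2_w _.
case/edge_flagsP: yx => ->.
- by rewrite (tpermD (a0_nfix x) (a2_nfix x)) tpermL.
- by rewrite tpermL (tpermD x_a2 (a0_nfix (a2 x))) a0a2a0.
- by rewrite tpermR (tpermD x_a0) ?a2K // eq_sym.
- by rewrite (tpermD a0_w a2_w) tpermR a0a2K.
Qed.

Lemma tperm_edge_flags_out x y : y \notin edge_flags x ->
  tperm x (a0 (a2 x)) (tperm (a0 x) (a2 x) y) = y.
Proof.
move=> yx; have neq z : z \in edge_flags x -> z != y by apply: contraTneq => ->.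
rewrite !tpermD ?neq //; apply/edge_flagsP;
  by [constructor 1 | constructor 2 | constructor 3 | constructor 4].
Qed.

Lemma pd2_toggle Z x y : edge_set a0 a2 Z ->
  pd2 a0 a2 (symdiff Z (edge_flags x)) y
  = pd2 a0 a2 Z (tperm x (a0 (a2 x)) (tperm (a0 x) (a2 x) y)).
Proof.
move=> hZ; case/boolP: (y \in edge_flags x) => yx.
  by rewrite pd2_symdiff_edge // tperm_edge_flags.
by rewrite pd2_symdiff_out // tperm_edge_flags_out.
Qed.

Lemma nvert_toggle Z x (s : {perm T}) : edge_set a0 a2 Z ->
  (forall y, s y = a1 (pd2 a0 a2 Z y)) ->
  nvert (symdiff Z (edge_flags x)) + (x \notin porbit s (a0 (a2 x)))
    + (a0 x \notin porbit (tperm x (a0 (a2 x)) * s) (a2 x)) = (nvert Z).+1.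
Proof.
move=> hZ sE; set s' := (tperm (a0 x) (a2 x) * (tperm x (a0 (a2 x)) * s))%g.
have s'E y : s' y = a1 (pd2 a0 a2 (symdiff Z (edge_flags x)) y).
  by rewrite !permM sE pd2_toggle.
have hZ' := edge_set_symdiff hZ (edge_set_edge_flags x).
have := porbits_mul_tperm s x (a0 (a2 x)).
have := porbits_mul_tperm (tperm x (a0 (a2 x)) * s) (a0 x) (a2 x).
rewrite /= -/s' (card_porbits_nvert hZ sE) (card_porbits_nvert hZ' s'E).
rewrite a0_neq_a2 eq_sym (negbTE (a0a2_nfix x)) /=.
case: (x \notin _); case: (a0 x \notin _) => /=; lia.
Qed.

Lemma nvert_toggle_succ Z x (s : {perm T}) : edge_set a0 a2 Z ->
  (forall y, s y = a1 (pd2 a0 a2 Z y)) ->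
  nvert (symdiff Z (edge_flags x)) = (nvert Z).+1 -> x \in porbit s (a0 (a2 x)).
Proof.
move=> hZ sE; have := nvert_toggle x hZ sE.
by case: (x \in _); case: (a0 x \notin _) => //=; lia.
Qed.

Lemma nvf_toggle Z x : edge_set a0 a2 Z ->
  let Z' := symdiff Z (edge_flags x) in
  nvf Z' <= nvf Z + 2 /\
  (nvf Z' = nvf Z + 2 ->
   nvert Z' = (nvert Z).+1 /\ nvert (symdiff (~: Z) (edge_flags x)) = (nvert (~: Z)).+1).
Proof.
move=> hZ Z'; have [s sE] := vertex_perm_exists hZ.
have [sC sCE] := vertex_perm_exists (edge_setC hZ).
have := nvert_toggle x hZ sE; have := nvert_toggle x (edge_setC hZ) sCE.
rewrite /nvf /Z' setC_symdiff.
case: (x \notin _); case: (a0 x \notin _); case: (x \notin _); case: (a0 x \notin _) => /=;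
  split; lia.
Qed.

Section EdgeColouring.
Variables (Z P : {set T}) (x : T).
Hypothesis hZ : edge_set a0 a2 Z.
Hypothesis altP : alternating a1 (pd2 a0 a2 Z) P.
Hypothesis oppP : {in edge_flags x, forall y, (a0 (a2 y) \in P) = (y \in P)}.

Lemma alternating_toggle : alternating a1 (pd2 a0 a2 (symdiff Z (edge_flags x))) P.
Proof.
move=> y; split; first exact: (altP y).1.
case/boolP: (y \in edge_flags x) => yx; last by rewrite pd2_symdiff_out // (altP y).2.
by rewrite pd2_symdiff_edge // (altP _).2 oppP.
Qed.

Lemma alternating_edge_flags y : x \in P -> y \in edge_flags x -> y \in P ->
  y = x \/ y = a0 (a2 x).
Proof.
move=> xP yx yP.
have a0x : a0 x \in edge_flags x by apply/edge_flagsP; constructor 2.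
have a2P : (a2 x \in P) = (a0 x \in P) by rewrite -[in LHS](a0a2a0 x) oppP.
have a0xNP : a0 x \notin P.
  by have := (altP x).2; rewrite xP /pd2; case: ifP => _; rewrite ?a2P => ->.
case/edge_flagsP: yx yP => -> yP; [by left | | | by right].
  by rewrite yP in a0xNP.
by move: yP; rewrite a2P (negbTE a0xNP).
Qed.

Lemma odd_nvert_toggle_in : x \in P ->
  odd (nvert (symdiff Z (edge_flags x))) = ~~ odd (nvert Z).
Proof.
(* rho keeps one s-cycle per vertex and fixes the rest, and toggling the edge
   multiplies it by the single transposition of x and w. *)
move=> xP; set w := a0 (a2 x); set Z' := symdiff Z (edge_flags x).
have hZ' : edge_set a0 a2 Z' := edge_set_symdiff hZ (edge_set_edge_flags x).
have wx : w \in edge_flags x by apply/edge_flagsP; constructor 4.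
have wP : w \in P by rewrite oppP // edge_flags_id.
have [s sE] := vertex_perm_exists hZ; have [s' s'E] := vertex_perm_exists hZ'.
have [rho rhoE] := perm_restrict_exists sE altP.
have rho'E y : (tperm x w * rho)%g y = if y \in P then s' y else y.
  rewrite permM s'E; case: tpermP => [->|->|yNx yNw].
  - by rewrite rhoE wP xP sE pd2_symdiff_edge ?edge_flags_id.
  - by rewrite rhoE wP xP sE pd2_symdiff_edge // a0a2K.
  rewrite rhoE sE; case: ifP => // yP; rewrite pd2_symdiff_out //.
  by apply/negP => /(alternating_edge_flags xP)/(_ yP)[/yNx|/yNw].
have := porbits_mul_tperm rho x w.
rewrite /= (card_porbits_restrict a1K (pd2K hZ) sE altP rhoE).
rewrite (card_porbits_restrict a1K (pd2K hZ') s'E alternating_toggle rho'E).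
rewrite eq_sym (negbTE (a0a2_nfix x)) => /(congr1 odd).
by rewrite /nvert !oddD odd_double /=; case: (odd _); case: (odd _); case: (odd _).
Qed.

End EdgeColouring.

Lemma odd_nvert_toggle Z P x : edge_set a0 a2 Z -> alternating a1 (pd2 a0 a2 Z) P ->
  {in edge_flags x, forall y, (a0 (a2 y) \in P) = (y \in P)} ->
  odd (nvert (symdiff Z (edge_flags x))) = ~~ odd (nvert Z).
Proof.
move=> hZ altP oppP; case/boolP: (x \in P) => xP; first exact: odd_nvert_toggle_in.
have px : pd2 a0 a2 Z x \in edge_flags x.
  by apply/edge_flagsP; rewrite /pd2; case: ifP; [constructor 2 | constructor 3].
rewrite -(edge_flags_eq px); apply: odd_nvert_toggle_in => //.
  by rewrite (edge_flags_eq px).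
by rewrite (altP x).2.
Qed.

Lemma odd_nvert_symdiff Y P D : edge_set a0 a2 Y -> edge_set a0 a2 D ->
  alternating a1 (pd2 a0 a2 Y) P ->
  {in D, forall y, (a0 (a2 y) \in P) = (y \in P)} ->
  alternating a1 (pd2 a0 a2 (symdiff Y D)) P /\
  odd (nvert (symdiff Y D)) = odd (nvert Y) (+) odd (#|D| %/ 4).
Proof.
move=> hY + altP; have [n] := ubnP #|D|.
elim: n D => // n IH D /ltnSE leDn hD oppP.
have [->|[x xD]] := set_0Vmem D; first by rewrite symdiff0 cards0 div0n addbF.
have sub_x := edge_flags_sub hD xD.
set D' := D :\: edge_flags x.
have hD' : edge_set a0 a2 D' := edge_setD hD (edge_set_edge_flags x).
have cardD : #|D| = #|D'| + 4.
  rewrite cardsD (setIidPr sub_x) card_edge_flags subnK //.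
  by rewrite -(card_edge_flags x) subset_leq_card.
have eD : symdiff Y D = symdiff (symdiff Y D') (edge_flags x).
  by rewrite -symdiffA /D' -symdiff_sub // symdiffK.
have [altP' oddD'] := IH D' ltac:(lia) hD' (sub_in1 (subsetP (subsetDl _ _)) oppP).
have oppx : {in edge_flags x, forall y, (a0 (a2 y) \in P) = (y \in P)}.
  by move=> y yx; apply: oppP; apply: (subsetP sub_x).
have hYD' := edge_set_symdiff hY hD'.
rewrite eD; split; first exact: alternating_toggle hYD' altP' oppx.
rewrite (odd_nvert_toggle hYD' altP' oppx) oddD' cardD divnDr // divnn /= addn1 /=.
by case: (odd _); case: (odd _).
Qed.

Lemma odd_nvert_symdiff_succ Y D : edge_set a0 a2 Y -> edge_set a0 a2 D ->
  {in D, forall x, nvert (symdiff Y (edge_flags x)) = (nvert Y).+1} ->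
  odd (nvert (symdiff Y D)) = odd (nvert Y) (+) odd (#|D| %/ 4).
Proof.
move=> hY hD incr; have [s sE] := vertex_perm_exists hY.
have [P altP] := alternating_exists a1K (pd2K hY) a1_nfix (@pd2_nfix Y) sE.
apply: (odd_nvert_symdiff hY hD altP _).2 => x xD.
have := nvert_toggle_succ hY sE (incr x xD).
by move/(porbit_stable (alternating_perm sE altP)) ->.
Qed.

Lemma nvf_down2 X W : edge_set a0 a2 X -> edge_set a0 a2 W -> nvf W + 2 <= nvf X ->
  exists2 Y, edge_set a0 a2 Y & nvf Y + 2 = nvf X.
Proof.
move=> hX; have [n] := ubnP #|symdiff X W|.
elim: n W => // n IH W /ltnSE leXWn hW leWX.
have [eWX|neWX] := eqVneq (nvf W + 2) (nvf X); first by exists W.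
have hXW := edge_set_symdiff hX hW.
(* Otherwise every edge toggle from W towards X raises both v and f by one, and
   the parity of v and of f changes once per edge of X \ W: nvf X - nvf W is even. *)
have [XW0|[y yXW]] := set_0Vmem (symdiff X W).
  by move/eqP: XW0 leWX; rewrite symdiff_eq0 => /eqP -> le; exfalso; lia.
have [/exists_inP[z zXW le_z]|/exists_inPn small] :=
  boolP [exists z in symdiff X W, nvf (symdiff W (edge_flags z)) + 2 <= nvf X].
  have sub_z := edge_flags_sub hXW zXW.
  apply: (IH (symdiff W (edge_flags z))) => //; last first.
    exact: edge_set_symdiff hW (edge_set_edge_flags z).
  rewrite symdiffA symdiff_sub // cardsD (setIidPr sub_z) card_edge_flags.
  by have := subset_leq_card sub_z; rewrite card_edge_flags; lia.
have toggle_up z : z \in symdiff X W -> nvf (symdiff W (edge_flags z)) = nvf W + 2.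
  move=> zXW; have [le_up _] := nvf_toggle z hW; have := small z zXW.
  by rewrite -ltnNge; lia.
have incr z : z \in symdiff X W -> nvert (symdiff W (edge_flags z)) = (nvert W).+1 /\
    nvert (symdiff (~: W) (edge_flags z)) = (nvert (~: W)).+1.
  by move=> zXW; have [_] := nvf_toggle z hW; apply; apply: toggle_up.
have oddX := odd_nvert_symdiff_succ hW hXW (fun z zXW => (incr z zXW).1).
have oddXC := odd_nvert_symdiff_succ (edge_setC hW) hXW (fun z zXW => (incr z zXW).2).
rewrite symdiffKr in oddX; rewrite -setC_symdiff symdiffKr in oddXC.
have nvfX : nvf X = nvf W + 3.
  by have := small y yXW; have := toggle_up y yXW; rewrite -ltnNge; lia.
have := congr1 odd nvfX; rewrite /nvf !oddD oddX oddXC /=.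
by case: (odd _); case: (odd _); case: (odd _).
Qed.

Lemma nvf_down Z X j : edge_set a0 a2 Z -> edge_set a0 a2 X -> nvf Z + 2 * j <= nvf X ->
  exists2 Y, edge_set a0 a2 Y & nvf Y + 2 * j = nvf X.
Proof.
move=> hZ; elim: j X => [|j IH] X hX le_ZX; first by exists X; rewrite ?addn0.
have [Y hY eY] := IH X hX ltac:(lia).
have [Y' hY' eY'] := nvf_down2 hY hZ ltac:(lia).
by exists Y' => //; lia.
Qed.

End PartialDuals.

Import Order.TTheory.
Local Open Scope ring_scope.

Lemma pd_genusE (T : finType) (a0 a1 a2 : T -> T) iso A : edge_set a0 a2 A ->
  pd_genus a0 a1 a2 iso A
  = (2 * norb (gen3 a0 a1 a2) + norb (gen2 a0 a2))%N%:Z - (nvf a0 a1 a2 A)%:Z.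
Proof.
move=> hA.
have conn : norb (gen3 (pd0 a0 a2 A) a1 (pd2 a0 a2 A)) = norb (gen3 a0 a1 a2).
  apply: eq_norb => x y; rewrite /gen3 /pd0 /pd2.
  by case: (x \in A); case: (y == a0 x); case: (y == a2 x); rewrite /= ?orbT ?orbF.
have edges : norb (gen2 (pd0 a0 a2 A) (pd2 a0 a2 A)) = norb (gen2 a0 a2).
  by apply: eq_norb => x y; rewrite /gen2 /pd0 /pd2; case: (x \in A); rewrite // orbC.
have faces : norb (gen2 (pd0 a0 a2 A) a1) = nvert a0 a1 a2 (~: A).
  apply: eq_norb => x y; rewrite /gen2 /pd0 /pd2 inE orbC.
  by case: (x \in A).
rewrite /pd_genus /euler_genus conn edges faces /nvf -/(nvert a0 a1 a2 A); lia.
Qed.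

Lemma max_pd_genus_attained (T : finType) (a0 a1 a2 : T -> T) iso :
  exists2 Z, edge_set a0 a2 Z & max_pd_genus a0 a1 a2 iso = pd_genus a0 a1 a2 iso Z.
Proof.
rewrite /max_pd_genus; elim/big_rec: _ => [|A g hA [Z hZ ->]].
  by exists set0 => //; apply/forallP => x; rewrite inE.
by rewrite maxEle; case: ifP => _; [exists Z | exists A].
Qed.

Theorem corollary1 (D : finType) (a0 a1 a2 : D -> D) (iso : nat)
  (HG : is_ribbon_graph a0 a1 a2) (k : int) :
  (exists2 A : {set D}, edge_set a0 a2 A & pd_genus a0 a1 a2 iso A = k) ->
  (exists2 B : {set D}, edge_set a0 a2 B & pd_genus a0 a1 a2 iso B = k + 1) ->
  forall m : int, k + 2 <= m -> m <= max_pd_genus a0 a1 a2 iso ->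
  exists2 C : {set D}, edge_set a0 a2 C & pd_genus a0 a1 a2 iso C = m.
Proof.
case: HG => -[a0K a1K a2K] [[a0_nfix a1_nfix a2_nfix] [a02C a0_neq_a2]].
move=> [A hA eA] [B hB eB] m le_km le_mM.
have [Z hZ eZ] := max_pd_genus_attained a0 a1 a2 iso.
rewrite eZ in le_mM; rewrite !pd_genusE // in eA eB le_mM.
set c := (2 * _ + _)%N in eA eB le_mM.
have [X hX [j eX]] : exists2 X, edge_set a0 a2 X &
    exists j : nat, (nvf a0 a1 a2 X)%:Z = c%:Z - m + (2 * j)%N%:Z.
  have [n ekm] : exists n : nat, m - k = n%:Z by exists `|m - k|%N; lia.
  have := odd_double_half n; case: (odd n) => /= n2.
    by exists B => //; exists n./2; lia.
  by exists A => //; exists n./2; lia.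
have le_ZX : (nvf a0 a1 a2 Z + 2 * j <= nvf a0 a1 a2 X)%N by lia.
have [Y hY eY] := nvf_down a0K a1K a2K a0_nfix a1_nfix a2_nfix a02C a0_neq_a2 hZ hX le_ZX.
by exists Y => //; rewrite pd_genusE //; lia.
Qed.
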